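(* Let $\varphi:S^1\to S^1$ be a minimal orientation preserving circle homeomorphism with lift $\Phi$, and for $x_0\in\mathbb{R}$ let $\Gamma(x_0)$ be the curlicue generated by the orbit $u_n=\Phi^n(x_0)$. Then either $\Gamma(x_0)$ is bounded for every $x_0$, or $\Gamma(x_0)$ is unbounded for every $x_0$. Moreover, in the bounded case there is a closed curve $\tau=u(S^1)$, where $u:S^1\to\mathbb{C}$ is a continuous function, whose shape does not depend on $x_0$, such that for every $x_0$ the vertices of $\Gamma(x_0)$ lie on the translate $\tau-u(x_0)$ of $\tau$.
   Context: Identify $S^1=\mathbb{R}/\mathbb{Z}$ via $x\mapsto\exp(2\pi\imath x)$; a lift of $\varphi$ is a homeomorphism $\Phi:\mathbb{R}\to\mathbb{R}$ with $\Phi(x+1)=\Phi(x)+1$ projecting to $\varphi$. For a real sequence $u=(u_n)_{n\ge0}$, the curlicue is the piecewise linear curve in $\mathbb{C}$ passing consecutively through $z_0=0$ and $z_n=\sum_{k=0}^{n-1}\exp(2\pi\imath u_k)$, $n\ge1$; these $z_n$ are its vertices. A curve is bounded if it has finite diameter. *)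

From Stdlib Require Import Reals.
From Coquelicot Require Import Coquelicot.
Open Scope R_scope.

Fixpoint iter_fun (f : R -> R) (n : nat) (x : R) : R :=
  match n with
  | O => x
  | S m => f (iter_fun f m x)
  end.

Definition e2pi (t : R) : C := (cos (2 * PI * t), sin (2 * PI * t)).

Definition is_lift_of_circle_homeo (Phi : R -> R) : Prop :=
  (forall x, continuous Phi x) /\
  (exists Psi : R -> R, (forall x, continuous Psi x) /\
     (forall x, Psi (Phi x) = x) /\ (forall y, Phi (Psi y) = y)) /\
  (forall x, Phi (x + 1) = Phi x + 1).

(* the projected homeomorphism preserves orientation iff its lift increases *)
Definition orientation_preserving (Phi : R -> R) : Prop :=
  forall x y, x < y -> Phi x < Phi y.

(* y (in R) lies over a point of the full (two-sided) orbit of the projection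
   of x: y = Phi^n(x) or x = Phi^n(y), i.e. y = Phi^m(x) for some m in Z. *)
Definition in_full_orbit (Phi : R -> R) (x y : R) : Prop :=
  exists n : nat, iter_fun Phi n x = y \/ iter_fun Phi n y = x.

Definition minimal_lift (Phi : R -> R) : Prop :=
  forall x y eps, 0 < eps ->
    exists z (k : Z), in_full_orbit Phi x z /\ Rabs (z - y - IZR k) < eps.

Fixpoint curlicue_vertex (Phi : R -> R) (x0 : R) (n : nat) : C :=
  match n with
  | O => 0%C
  | S m => Cplus (curlicue_vertex Phi x0 m) (e2pi (iter_fun Phi m x0))
  end.

Definition curlicue (Phi : R -> R) (x0 : R) (w : C) : Prop :=
  exists (n : nat) (t : R), 0 <= t <= 1 /\
    w = Cplus (Cmult (RtoC (1 - t)) (curlicue_vertex Phi x0 n))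
              (Cmult (RtoC t) (curlicue_vertex Phi x0 (S n))).

Definition bounded_set (S : C -> Prop) : Prop :=
  exists M : R, forall w v, S w -> S v -> Cmod (Cminus w v) <= M.

From Stdlib Require Import Reals Lra Lia Classical.
From Coquelicot Require Import Coquelicot.
Open Scope R_scope.

(* The vertices of the curlicue of x0 are the Birkhoff sums z_n = sum_{k<n} e2pi(Phi^k x0).
   If they are bounded for one x0, the Gottschalk-Hedlund argument, applied to each real
   component f of e2pi, solves g o Phi = g + f with g continuous and 1-periodic:
   g(x) = liminf of S_n f(x0) over the times n at which Phi^n(x0) tends to x modulo 1 is
   a lower semicontinuous solution (minimality makes every point such a limit); the same
   construction for -f gives a lower semicontinuous g' with g' o Phi = g' - f, and g + g'
   is Phi-invariant and lower semicontinuous, hence constant by minimality, so g is also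
   upper semicontinuous. With u = (g_re, g_im), z_n = u(Phi^n x0) - u(x0) for every x0,
   and these are bounded since u is. *)

Definition sup (E : R -> Prop) : R := real (Lub_Rbar E).

Lemma Lub_Rbar_bounded (E : R -> Prop) (a B : R) :
  E a -> (forall t, E t -> t <= B) -> Lub_Rbar E = Finite (sup E).
Proof.
  intros Ea HB. unfold sup.
  destruct (Lub_Rbar_correct E) as [Hub Hlub].
  destruct (Lub_Rbar E) as [l| |]; simpl; [reflexivity | |].
  - destruct (Hlub (Finite B) HB).
  - destruct (Hub a Ea).
Qed.

Lemma sup_ub (E : R -> Prop) (B t : R) :
  (forall t, E t -> t <= B) -> E t -> t <= sup E.
Proof.
  intros HB Et. pose proof (Lub_Rbar_correct E) as [Hub _].
  rewrite (Lub_Rbar_bounded E t B Et HB) in Hub. exact (Hub t Et).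
Qed.

Lemma sup_le (E : R -> Prop) (a M : R) :
  E a -> (forall t, E t -> t <= M) -> sup E <= M.
Proof.
  intros Ea HM. pose proof (Lub_Rbar_correct E) as [_ Hlub].
  rewrite (Lub_Rbar_bounded E a M Ea HM) in Hlub. exact (Hlub (Finite M) HM).
Qed.

Lemma sup_approx (E : R -> Prop) (a B eps : R) :
  E a -> (forall t, E t -> t <= B) -> 0 < eps -> exists t, E t /\ sup E - eps < t.
Proof.
  intros Ea HB Heps. apply NNPP. intros Hnone.
  enough (sup E <= sup E - eps) by lra.
  apply (sup_le E a); trivial.
  intros t Et. apply Rnot_lt_le. intros Ht. apply Hnone. eauto.
Qed.

Lemma continuous_eps_delta (f : R -> R) (x : R) :
  continuous f x <-> forall eps, 0 < eps ->
    exists d, 0 < d /\ forall y, Rabs (y - x) < d -> Rabs (f y - f x) < eps.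
Proof.
  unfold continuous. rewrite <- continuity_pt_filterlim. split.
  - intros Hf eps Heps. destruct (Hf eps Heps) as [d [Hd Hfd]].
    exists d. split; trivial. intros y Hy.
    destruct (Req_dec y x) as [->|Hne].
    + rewrite Rminus_eq_0, Rabs_R0. exact Heps.
    + apply Hfd. repeat split; auto.
  - intros Hf eps Heps. destruct (Hf eps Heps) as [d [Hd Hfd]].
    exists d. split; trivial. intros y [_ Hy]. exact (Hfd y Hy).
Qed.

Definition lower_semicontinuous (f : R -> R) (x : R) : Prop :=
  forall eps, 0 < eps -> exists d, 0 < d /\ forall y, Rabs (y - x) < d -> f x - eps < f y.

Lemma lower_semicontinuous_plus (f g : R -> R) (x : R) :
  lower_semicontinuous f x -> lower_semicontinuous g x ->
  lower_semicontinuous (fun y => f y + g y) x.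
Proof.
  intros Hf Hg eps Heps.
  destruct (Hf (eps / 2)) as [df [Hdf Hf']]; [lra|].
  destruct (Hg (eps / 2)) as [dg [Hdg Hg']]; [lra|].
  exists (Rmin df dg). split; [now apply Rmin_pos|]. intros y Hy.
  specialize (Hf' y (Rlt_le_trans _ _ _ Hy (Rmin_l df dg))).
  specialize (Hg' y (Rlt_le_trans _ _ _ Hy (Rmin_r df dg))). lra.
Qed.

Lemma continuous_of_semicontinuous (f : R -> R) (x : R) :
  lower_semicontinuous f x -> lower_semicontinuous (fun y => - f y) x -> continuous f x.
Proof.
  intros Hl Hu. apply continuous_eps_delta. intros eps Heps.
  destruct (Hl eps Heps) as [dl [Hdl Hl']]. destruct (Hu eps Heps) as [du [Hdu Hu']].
  exists (Rmin dl du). split; [now apply Rmin_pos|]. intros y Hy.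
  specialize (Hl' y (Rlt_le_trans _ _ _ Hy (Rmin_l dl du))).
  specialize (Hu' y (Rlt_le_trans _ _ _ Hy (Rmin_r dl du))).
  apply Rabs_def1; lra.
Qed.

Lemma periodic_add_int (h : R -> R) :
  (forall x, h (x + 1) = h x) -> forall x (k : Z), h (x + IZR k) = h x.
Proof.
  intros Hh x k. induction k as [|k IH|k IH] using Z.peano_ind.
  - now rewrite Rplus_0_r.
  - now rewrite succ_IZR, <- Rplus_assoc, Hh.
  - rewrite <- IH, <- (Z.succ_pred k), succ_IZR, Z.pred_succ, <- Rplus_assoc, Hh.
    reflexivity.
Qed.

Lemma lift_add_int (F : R -> R) :
  (forall x, F (x + 1) = F x + 1) -> forall x (k : Z), F (x + IZR k) = F x + IZR k.
Proof.
  intros HF x k.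
  assert (Hper : forall y, (fun y => F y - y) (y + 1) = (fun y => F y - y) y)
    by (intros y; simpl; rewrite HF; ring).
  pose proof (periodic_add_int _ Hper x k) as H. simpl in H. lra.
Qed.

Section Lift.

Variables Phi Psi : R -> R.
Hypothesis Phi_add1 : forall x, Phi (x + 1) = Phi x + 1.
Hypothesis Psi_Phi : forall x, Psi (Phi x) = x.
Hypothesis Phi_cont : forall x, continuous Phi x.
Hypothesis Psi_cont : forall x, continuous Psi x.
Hypothesis Phi_minimal : minimal_lift Phi.

Lemma Psi_iter_succ_add_int (n : nat) (x : R) (k : Z) :
  Psi (iter_fun Phi (S n) x + IZR k) = iter_fun Phi n x + IZR k.
Proof. simpl. now rewrite <- lift_add_int, Psi_Phi. Qed.

Lemma invariant_full_orbit (h : R -> R) (x z : R) :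
  (forall x, h (Phi x) = h x) -> in_full_orbit Phi x z -> h z = h x.
Proof.
  intros Hh.
  assert (Hiter : forall n y, h (iter_fun Phi n y) = h y).
  { induction n as [|n IH]; intros y; simpl; [reflexivity|]. now rewrite Hh, IH. }
  intros [n [<- | <-]]; rewrite Hiter; reflexivity.
Qed.

Definition omega_limit (x0 y : R) : Prop :=
  forall eps (N : nat), 0 < eps ->
    exists n (k : Z), (N <= n)%nat /\ Rabs (iter_fun Phi n x0 + IZR k - y) < eps.

Lemma omega_limit_exists (x0 : R) : exists l, omega_limit x0 l.
Proof.
  set (frac n := iter_fun Phi n x0 - IZR (Int_part (iter_fun Phi n x0))).
  destruct (Bolzano_Weierstrass frac (fun c => 0 <= c <= 1) (compact_P3 0 1)) as [l Hl].
  { intros n. unfold frac. destruct (base_Int_part (iter_fun Phi n x0)). lra. }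
  exists l. intros eps N Heps.
  destruct (Hl (disc l (mkposreal eps Heps)) N) as [n [HNn Hn]].
  { exists (mkposreal eps Heps). intros y Hy. exact Hy. }
  exists n, (- Int_part (iter_fun Phi n x0))%Z. split; trivial.
  unfold disc, frac in Hn. simpl in Hn. now rewrite opp_IZR.
Qed.

Lemma omega_limit_Phi (x0 y : R) : omega_limit x0 y -> omega_limit x0 (Phi y).
Proof.
  intros Hy eps N Heps.
  destruct (proj1 (continuous_eps_delta Phi y) (Phi_cont y) eps Heps) as [d [Hd HPhi]].
  destruct (Hy d N Hd) as [n [k [HNn Hn]]].
  exists (S n), k. split; [lia|].
  simpl. rewrite <- lift_add_int by exact Phi_add1. exact (HPhi _ Hn).
Qed.

Lemma omega_limit_Psi (x0 y : R) : omega_limit x0 y -> omega_limit x0 (Psi y).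
Proof.
  intros Hy eps N Heps.
  destruct (proj1 (continuous_eps_delta Psi y) (Psi_cont y) eps Heps) as [d [Hd HPsi]].
  destruct (Hy d (S N) Hd) as [[|n] [k [HNn Hn]]]; [lia|].
  exists n, k. split; [lia|].
  rewrite <- Psi_iter_succ_add_int. exact (HPsi _ Hn).
Qed.

Lemma omega_limit_full_orbit (x0 y z : R) :
  omega_limit x0 y -> in_full_orbit Phi y z -> omega_limit x0 z.
Proof.
  assert (Hfwd : forall n y, omega_limit x0 y -> omega_limit x0 (iter_fun Phi n y)).
  { induction n as [|n IH]; intros y' Hy'; simpl; auto using omega_limit_Phi. }
  assert (Hbwd : forall n z, omega_limit x0 (iter_fun Phi n z) -> omega_limit x0 z).
  { induction n as [|n IH]; intros z' Hz'; simpl in Hz'; [exact Hz'|].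
    apply IH. rewrite <- (Psi_Phi (iter_fun Phi n z')). now apply omega_limit_Psi. }
  intros Hy [n [<- | Hn]]; [auto|]. apply (Hbwd n). now rewrite Hn.
Qed.

Theorem omega_limit_everywhere (x0 y : R) : omega_limit x0 y.
Proof.
  destruct (omega_limit_exists x0) as [l Hl].
  intros eps N Heps.
  destruct (Phi_minimal l y (eps / 2)) as [z [k [Hz Hzy]]]; [lra|].
  destruct (omega_limit_full_orbit x0 l z Hl Hz (eps / 2) N) as [n [k' [HNn Hn]]]; [lra|].
  exists n, (k' - k)%Z. split; trivial. rewrite minus_IZR.
  apply Rabs_lt_between in Hzy, Hn. apply Rabs_lt_between. lra.
Qed.

Fixpoint birkhoff_sum (f : R -> R) (x0 : R) (n : nat) : R :=
  match n with
  | O => 0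
  | S m => birkhoff_sum f x0 m + f (iter_fun Phi m x0)
  end.

Lemma birkhoff_sum_opp (f : R -> R) (x0 : R) (n : nat) :
  birkhoff_sum (fun x => - f x) x0 n = - birkhoff_sum f x0 n.
Proof. induction n as [|n IH]; simpl; [ring|]. rewrite IH. ring. Qed.

Section Cocycle.

Variables (f : R -> R) (x0 B : R).
Hypothesis f_cont : forall x, continuous f x.
Hypothesis f_periodic : forall x, f (x + 1) = f x.
Hypothesis sums_bounded : forall n, Rabs (birkhoff_sum f x0 n) <= B.

Definition lower_bound_near (r : R) (N : nat) (x t : R) : Prop :=
  forall n (k : Z), (N <= n)%nat -> Rabs (iter_fun Phi n x0 + IZR k - x) < r ->
    t <= birkhoff_sum f x0 n.

Definition eventual_lower_bound (x t : R) : Prop :=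
  exists r N, 0 < r /\ lower_bound_near r N x t.

Definition orbit_liminf (x : R) : R := sup (eventual_lower_bound x).

Lemma eventual_lower_bound_le (x t : R) : eventual_lower_bound x t -> t <= B.
Proof.
  intros (r & N & Hr & Ht).
  destruct (omega_limit_everywhere x0 x r N Hr) as [n [k [HNn Hn]]].
  specialize (Ht n k HNn Hn). specialize (sums_bounded n).
  apply Rabs_le_between in sums_bounded. lra.
Qed.

Lemma eventual_lower_bound_opp_bound (x : R) : eventual_lower_bound x (- B).
Proof.
  exists 1, 0%nat. split; [lra|]. intros n k _ _.
  specialize (sums_bounded n). apply Rabs_le_between in sums_bounded. lra.
Qed.

Lemma orbit_liminf_ub (x t : R) : eventual_lower_bound x t -> t <= orbit_liminf x.
Proof. apply sup_ub with B. exact (eventual_lower_bound_le x). Qed.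

Lemma orbit_liminf_le (x M : R) :
  (forall t, eventual_lower_bound x t -> t <= M) -> orbit_liminf x <= M.
Proof. apply sup_le with (- B). exact (eventual_lower_bound_opp_bound x). Qed.

Lemma orbit_liminf_bounded (x : R) : Rabs (orbit_liminf x) <= B.
Proof.
  apply Rabs_le. split.
  - exact (orbit_liminf_ub x _ (eventual_lower_bound_opp_bound x)).
  - exact (orbit_liminf_le x B (eventual_lower_bound_le x)).
Qed.

Lemma lower_bound_near_add1 (r : R) (N : nat) (x t : R) :
  lower_bound_near r N (x + 1) t <-> lower_bound_near r N x t.
Proof.
  split; intros Ht n k HNn Hn.
  - apply (Ht n (k + 1)%Z HNn). rewrite plus_IZR.
    replace (iter_fun Phi n x0 + (IZR k + 1) - (x + 1))
      with (iter_fun Phi n x0 + IZR k - x) by ring. exact Hn.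
  - apply (Ht n (k - 1)%Z HNn). rewrite minus_IZR.
    replace (iter_fun Phi n x0 + (IZR k - 1) - x)
      with (iter_fun Phi n x0 + IZR k - (x + 1)) by ring. exact Hn.
Qed.

Lemma orbit_liminf_periodic (x : R) : orbit_liminf (x + 1) = orbit_liminf x.
Proof.
  unfold orbit_liminf, sup. f_equal. apply Lub_Rbar_eqset. intros t.
  split; intros (r & N & Hr & Ht); exists r, N; split; trivial;
    now apply lower_bound_near_add1.
Qed.

Lemma orbit_liminf_lsc (x : R) : lower_semicontinuous orbit_liminf x.
Proof.
  intros eps Heps.
  destruct (sup_approx _ (- B) B eps (eventual_lower_bound_opp_bound x)
              (eventual_lower_bound_le x) Heps) as [t [(r & N & Hr & Ht) Hlt]].
  exists (r / 2). split; [lra|]. intros y Hy.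
  assert (Hty : eventual_lower_bound y t).
  { exists (r / 2), N. split; [lra|]. intros n k HNn Hn. apply (Ht n k HNn).
    apply Rabs_lt_between in Hy, Hn. apply Rabs_lt_between. lra. }
  pose proof (orbit_liminf_ub y t Hty). unfold orbit_liminf in *. lra.
Qed.

Lemma eventual_lower_bound_forward (x t eps : R) :
  0 < eps -> eventual_lower_bound x t -> eventual_lower_bound (Phi x) (t + f x - eps).
Proof.
  intros Heps (r & N & Hr & Ht).
  destruct (proj1 (continuous_eps_delta f x) (f_cont x) eps Heps) as [df [Hdf Hf]].
  destruct (proj1 (continuous_eps_delta Psi (Phi x)) (Psi_cont (Phi x)) (Rmin r df))
    as [d [Hd HPsi]]; [now apply Rmin_pos|].
  exists d, (S N). split; trivial. intros [|n] k HNn Hn; [lia|].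
  specialize (HPsi _ Hn). rewrite Psi_iter_succ_add_int, Psi_Phi in HPsi.
  specialize (Ht n k ltac:(lia) (Rlt_le_trans _ _ _ HPsi (Rmin_l r df))).
  specialize (Hf _ (Rlt_le_trans _ _ _ HPsi (Rmin_r r df))).
  rewrite periodic_add_int in Hf by exact f_periodic.
  apply Rabs_lt_between in Hf. simpl. lra.
Qed.

Lemma eventual_lower_bound_backward (x t eps : R) :
  0 < eps -> eventual_lower_bound (Phi x) t -> eventual_lower_bound x (t - f x - eps).
Proof.
  intros Heps (r & N & Hr & Ht).
  destruct (proj1 (continuous_eps_delta f x) (f_cont x) eps Heps) as [df [Hdf Hf]].
  destruct (proj1 (continuous_eps_delta Phi x) (Phi_cont x) r Hr) as [d [Hd HPhi]].
  exists (Rmin d df), N. split; [now apply Rmin_pos|]. intros n k HNn Hn.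
  assert (Hstep : Rabs (iter_fun Phi (S n) x0 + IZR k - Phi x) < r).
  { simpl. rewrite <- lift_add_int by exact Phi_add1.
    exact (HPhi _ (Rlt_le_trans _ _ _ Hn (Rmin_l d df))). }
  specialize (Ht (S n) k ltac:(lia) Hstep).
  specialize (Hf _ (Rlt_le_trans _ _ _ Hn (Rmin_r d df))).
  rewrite periodic_add_int in Hf by exact f_periodic.
  apply Rabs_lt_between in Hf. simpl in Ht. lra.
Qed.

Lemma orbit_liminf_cocycle (x : R) : orbit_liminf (Phi x) = orbit_liminf x + f x.
Proof.
  apply Rle_antisym; apply Rle_plus_epsilon; intros eps Heps.
  - apply orbit_liminf_le. intros t Ht.
    pose proof (orbit_liminf_ub x _ (eventual_lower_bound_backward x t eps Heps Ht)). lra.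
  - enough (orbit_liminf x <= orbit_liminf (Phi x) - f x + eps) by lra.
    apply orbit_liminf_le. intros t Ht.
    pose proof (orbit_liminf_ub (Phi x) _ (eventual_lower_bound_forward x t eps Heps Ht)).
    lra.
Qed.

End Cocycle.

Lemma invariant_lsc_le (h : R -> R) :
  (forall x, h (Phi x) = h x) -> (forall x, h (x + 1) = h x) ->
  (forall x, lower_semicontinuous h x) -> forall x y, h y <= h x.
Proof.
  intros Hinv Hper Hlsc x y. apply Rle_plus_epsilon. intros eps Heps.
  destruct (Hlsc y eps Heps) as [d [Hd Hy]].
  destruct (Phi_minimal x y d Hd) as [z [k [Hz Hzy]]].
  specialize (Hy (z + IZR (- k))).
  rewrite periodic_add_int, (invariant_full_orbit h x z Hinv Hz) in Hy by exact Hper.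
  rewrite opp_IZR in Hy.
  enough (h y - eps < h x) by lra. apply Hy.
  replace (z + - IZR k - y) with (z - y - IZR k) by ring. exact Hzy.
Qed.

Theorem gottschalk_hedlund (f : R -> R) (x0 B : R) :
  (forall x, continuous f x) -> (forall x, f (x + 1) = f x) ->
  (forall n, Rabs (birkhoff_sum f x0 n) <= B) ->
  exists g : R -> R,
    (forall x, continuous g x) /\ (forall x, g (x + 1) = g x) /\
    (forall x, g (Phi x) = g x + f x) /\ (forall x, Rabs (g x) <= B).
Proof.
  intros f_cont f_periodic sums_bounded.
  set (g := orbit_liminf f x0). set (g' := orbit_liminf (fun x => - f x) x0).
  assert (opp_cont : forall x, continuous (fun x => - f x) x)
    by (intros x; exact (continuous_opp f x (f_cont x))).
  assert (opp_periodic : forall x, - f (x + 1) = - f x)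
    by (intros x; now rewrite f_periodic).
  assert (opp_bounded : forall n, Rabs (birkhoff_sum (fun x => - f x) x0 n) <= B)
    by (intros n; rewrite birkhoff_sum_opp, Rabs_Ropp; apply sums_bounded).
  assert (sum_invariant : forall x, g (Phi x) + g' (Phi x) = g x + g' x).
  { intros x. unfold g, g'.
    rewrite (orbit_liminf_cocycle f x0 B), (orbit_liminf_cocycle _ x0 B) by assumption.
    ring. }
  assert (sum_periodic : forall x, g (x + 1) + g' (x + 1) = g x + g' x).
  { intros x. unfold g, g'. now rewrite !orbit_liminf_periodic. }
  assert (sum_lsc : forall x, lower_semicontinuous (fun y => g y + g' y) x).
  { intros x. apply lower_semicontinuous_plus; now apply orbit_liminf_lsc with B. }
  assert (sum_const : forall x, g x + g' x = g 0 + g' 0).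
  { intros x. apply Rle_antisym;
      exact (invariant_lsc_le (fun y => g y + g' y) sum_invariant sum_periodic sum_lsc _ _). }
  exists g. split; [|split; [|split]].
  - intros x. apply continuous_of_semicontinuous; [now apply orbit_liminf_lsc with B|].
    intros eps Heps.
    destruct (orbit_liminf_lsc _ x0 B opp_bounded x eps Heps)
      as [d [Hd Hg']].
    exists d. split; trivial. intros y Hy. specialize (Hg' y Hy).
    pose proof (sum_const x). pose proof (sum_const y). fold g' in Hg'. lra.
  - exact (orbit_liminf_periodic f x0).
  - now apply orbit_liminf_cocycle with B.
  - now apply orbit_liminf_bounded.
Qed.

End Lift.

Lemma e2pi_periodic (t : R) : e2pi (t + 1) = e2pi t.
Proof.
  unfold e2pi. replace (2 * PI * (t + 1)) with (2 * PI * t + 2 * INR 1 * PI)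
    by (simpl; ring).
  now rewrite cos_period, sin_period.
Qed.

Lemma e2pi_fst_continuous (t : R) : continuous (fun t => fst (e2pi t)) t.
Proof. apply continuity_pt_filterlim, derivable_continuous_pt. unfold e2pi. simpl. reg. Qed.

Lemma e2pi_snd_continuous (t : R) : continuous (fun t => snd (e2pi t)) t.
Proof. apply continuity_pt_filterlim, derivable_continuous_pt. unfold e2pi. simpl. reg. Qed.

Lemma curlicue_vertex_birkhoff_sum (Phi : R -> R) (x0 : R) (n : nat) :
  curlicue_vertex Phi x0 n =
  (birkhoff_sum Phi (fun t => fst (e2pi t)) x0 n, birkhoff_sum Phi (fun t => snd (e2pi t)) x0 n).
Proof. induction n as [|n IH]; simpl; [reflexivity|]. now rewrite IH. Qed.

Lemma curlicue_vertex_mem (Phi : R -> R) (x0 : R) (n : nat) :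
  curlicue Phi x0 (curlicue_vertex Phi x0 n).
Proof. exists n, 0. split; [lra|]. rewrite Rminus_0_r. ring. Qed.

Lemma curlicue_vertex_bounded (Phi : R -> R) (x0 : R) :
  bounded_set (curlicue Phi x0) -> exists M, forall n, Cmod (curlicue_vertex Phi x0 n) <= M.
Proof.
  intros [M HM]. exists M. intros n.
  specialize (HM _ _ (curlicue_vertex_mem Phi x0 n) (curlicue_vertex_mem Phi x0 0)).
  simpl in HM. replace (Cminus (curlicue_vertex Phi x0 n) 0) with (curlicue_vertex Phi x0 n)
    in HM by ring. exact HM.
Qed.

Lemma curlicue_bounded_of_vertices (Phi : R -> R) (x0 K : R) :
  (forall n, Cmod (curlicue_vertex Phi x0 n) <= K) -> bounded_set (curlicue Phi x0).
Proof.
  intros HK.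
  assert (Hpoint : forall w, curlicue Phi x0 w -> Cmod w <= K).
  { intros w (n & t & Ht & ->).
    eapply Rle_trans; [apply Cmod_triangle|].
    rewrite !Cmod_mult, !Cmod_R, !Rabs_pos_eq by lra.
    pose proof (HK n). pose proof (HK (S n)). nra. }
  exists (K + K). intros w v Hw Hv. unfold Cminus.
  eapply Rle_trans; [apply Cmod_triangle|].
  rewrite Cmod_opp. pose proof (Hpoint w Hw). pose proof (Hpoint v Hv). lra.
Qed.

Lemma curlicue_vertex_cocycle (Phi : R -> R) (u : R -> C) :
  (forall x, u (Phi x) = Cplus (u x) (e2pi x)) ->
  forall x0 n, curlicue_vertex Phi x0 n = Cminus (u (iter_fun Phi n x0)) (u x0).
Proof.
  intros Hu x0 n. induction n as [|n IH]; simpl; [ring|]. rewrite IH, Hu. ring.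
Qed.

Lemma curlicue_bounded_of_cocycle (Phi : R -> R) (u : R -> C) (K : R) :
  (forall x, u (Phi x) = Cplus (u x) (e2pi x)) -> (forall x, Cmod (u x) <= K) ->
  forall x0, bounded_set (curlicue Phi x0).
Proof.
  intros Hu HK x0. apply curlicue_bounded_of_vertices with (K + K). intros n.
  rewrite (curlicue_vertex_cocycle Phi u Hu). unfold Cminus.
  eapply Rle_trans; [apply Cmod_triangle|].
  rewrite Cmod_opp. pose proof (HK (iter_fun Phi n x0)). pose proof (HK x0). lra.
Qed.

Lemma cocycle_of_bounded_curlicue (Phi Psi : R -> R) (x0 : R) :
  (forall x, Phi (x + 1) = Phi x + 1) -> (forall x, Psi (Phi x) = x) ->
  (forall x, continuous Phi x) -> (forall x, continuous Psi x) -> minimal_lift Phi ->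
  bounded_set (curlicue Phi x0) ->
  exists (u : R -> C) (K : R),
    (forall x, continuous u x) /\ (forall x, u (x + 1) = u x) /\
    (forall x, u (Phi x) = Cplus (u x) (e2pi x)) /\ (forall x, Cmod (u x) <= K).
Proof.
  intros Phi_add1 Psi_Phi Phi_cont Psi_cont Phi_minimal Hbounded.
  destruct (curlicue_vertex_bounded Phi x0 Hbounded) as [M HM].
  assert (Hsums : forall n, Rmax (Rabs (birkhoff_sum Phi (fun t => fst (e2pi t)) x0 n))
                                 (Rabs (birkhoff_sum Phi (fun t => snd (e2pi t)) x0 n)) <= M).
  { intros n. eapply Rle_trans; [|apply (HM n)].
    rewrite curlicue_vertex_birkhoff_sum. apply (Rmax_Cmod (_, _)). }
  destruct (gottschalk_hedlund Phi Psi Phi_add1 Psi_Phi Phi_cont Psi_cont Phi_minimal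
              _ x0 M e2pi_fst_continuous (fun t => f_equal fst (e2pi_periodic t))
              (fun n => Rle_trans _ _ _ (Rmax_l _ _) (Hsums n)))
    as (g1 & g1_cont & g1_periodic & g1_cocycle & g1_bounded).
  destruct (gottschalk_hedlund Phi Psi Phi_add1 Psi_Phi Phi_cont Psi_cont Phi_minimal
              _ x0 M e2pi_snd_continuous (fun t => f_equal snd (e2pi_periodic t))
              (fun n => Rle_trans _ _ _ (Rmax_r _ _) (Hsums n)))
    as (g2 & g2_cont & g2_periodic & g2_cocycle & g2_bounded).
  exists (fun x => (g1 x, g2 x)), (sqrt 2 * M). repeat split.
  - intros x. apply (continuous_comp_2 g1 g2 (fun a b => (a, b) : C)); trivial.
    apply (continuous_ext (fun p => p)); [now intros [a b] | apply continuous_id].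
  - intros x. now rewrite g1_periodic, g2_periodic.
  - intros x. now rewrite g1_cocycle, g2_cocycle.
  - intros x. eapply Rle_trans; [apply Cmod_2Rmax|].
    apply Rmult_le_compat_l; [apply sqrt_pos|]. apply Rmax_lub; [apply g1_bounded | apply g2_bounded].
Qed.

Theorem corollary3p6 (Phi : R -> R)
  (Hlift : is_lift_of_circle_homeo Phi)
  (Hor : orientation_preserving Phi)
  (Hmin : minimal_lift Phi) :
  ((forall x0, bounded_set (curlicue Phi x0)) \/
   (forall x0, ~ bounded_set (curlicue Phi x0))) /\
  ((forall x0, bounded_set (curlicue Phi x0)) ->
   exists u : R -> C,
     (forall x, continuous u x) /\ (forall x, u (x + 1) = u x) /\
     forall x0 (n : nat), exists y : R,
       curlicue_vertex Phi x0 n = Cminus (u y) (u x0)).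
Proof.
  destruct Hlift as [Phi_cont [[Psi [Psi_cont [Psi_Phi _]]] Phi_add1]].
  pose proof (cocycle_of_bounded_curlicue Phi Psi) as cocycle_of_bounded.
  split.
  - destruct (classic (exists x0, bounded_set (curlicue Phi x0))) as [[x0 Hx0] | Hnone].
    + left. destruct (cocycle_of_bounded x0 Phi_add1 Psi_Phi Phi_cont Psi_cont Hmin Hx0)
        as (u & K & _ & _ & Hu & HK).
      exact (curlicue_bounded_of_cocycle Phi u K Hu HK).
    + right. intros x0 Hx0. apply Hnone. now exists x0.
  - intros Hall.
    destruct (cocycle_of_bounded 0 Phi_add1 Psi_Phi Phi_cont Psi_cont Hmin (Hall 0))
      as (u & K & Hcont & Hper & Hu & _).
    exists u. split; [|split]; trivial.
    intros x0 n. exists (iter_fun Phi n x0). now apply curlicue_vertex_cocycle.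
Qed.
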